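(* Let $\Omega\subseteq\mathbb{R}^d$ be a nonempty open convex set and $F:\Omega\to\mathbb{R}$ a function of Legendre type with Bregman divergence $D_F$. Let $A=\prod_{i=1}^d[a_i,b_i]\subset\mathbb{R}^d$ be an axis-aligned box of positive finite volume (i.e. $a_i<b_i$ real), with boundary $\partial A$. Let $q\in\Omega\setminus A$, let $r\ge 0$ be finite, and let $B$ be the Bregman ball (either the primal ball $\{y\in\Omega: D_F(q\|y)\le r\}$ or the dual ball $\{y\in\Omega: D_F(y\|q)\le r\}$) centered at $q$ of radius $r$. If $B\cap\partial A=\emptyset$, then $A\cap\Omega\subseteq\Omega\setminus B$.
   Context: A function $F:\Omega\to\mathbb{R}$ on a nonempty open convex set $\Omega\subseteq\mathbb{R}^d$ is of Legendre type if (I) it is differentiable, (II) it is strictly convex, and (III) if $\partial\Omega$ is nonempty, then $\|\nabla F(x)\|\to\infty$ as $x\to\partial\Omega$. The Bregman divergence generated by $F$ is $D_F(x\|y)=F(x)-F(y)-\langle\nabla F(y),x-y\rangle$ for $x,y\in\Omega$. *)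

From HB Require Import structures.
From mathcomp Require Import all_boot all_order all_algebra.
From mathcomp Require Import all_classical all_reals all_analysis.
Set Implicit Arguments. Unset Strict Implicit. Unset Printing Implicit Defensive.
Import Order.TTheory GRing.Theory Num.Theory.
Import numFieldNormedType.Exports.
Local Open Scope classical_set_scope.
Local Open Scope ring_scope.

Section Bregman.
Context {R : realType} {d : nat}.
Implicit Types (Omega A : set 'rV[R]_d) (F : 'rV[R]_d -> R) (x y : 'rV[R]_d).

Definition ebasis (i : 'I_d) : 'rV[R]_d := \row_j (i == j)%:R.

Definition grad F x : 'rV[R]_d := \row_i ('d F x (ebasis i)).

Definition dotp x y : R := \sum_i x ord0 i * y ord0 i.
Definition enorm x : R := Num.sqrt (dotp x x).

(* convexity of Omega: we use the library's convex.convex_set *)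

Definition strictly_convex_on Omega F : Prop :=
  forall x y t, Omega x -> Omega y -> x != y -> 0 < t < 1 ->
    F (t *: x + (1 - t) *: y) < t * F x + (1 - t) * F y.

(* Legendre type on a nonempty open convex Omega (F values outside Omega
   are irrelevant).  (III): for every boundary point z of Omega,
   ||grad F x|| -> +oo as x -> z with x in Omega. *)
Definition legendre_type Omega F : Prop :=
  [/\ (forall x, Omega x -> differentiable F x),
      strictly_convex_on Omega F &
      (forall z, closure Omega z -> ~ Omega z ->
         forall M : R, exists2 e : R, 0 < e &
           forall x, Omega x -> enorm (x - z) < e -> M < enorm (grad F x))].

Definition bregman F x y : R := F x - F y - dotp (grad F y) (x - y).

Definition primal_ball Omega F q r : set 'rV[R]_d :=
  [set y | Omega y /\ bregman F q y <= r].
Definition dual_ball Omega F q r : set 'rV[R]_d :=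
  [set y | Omega y /\ bregman F y q <= r].

Definition box (a b : 'I_d -> R) : set 'rV[R]_d :=
  [set x | forall i, a i <= x ord0 i <= b i].

Definition boundary A : set 'rV[R]_d := closure A `\` interior A.

End Bregman.

From HB Require Import structures.
From mathcomp Require Import all_boot all_order all_algebra.
From mathcomp Require Import all_classical all_reals all_analysis.
From mathcomp Require Import lra.
Import Order.TTheory GRing.Theory Num.Theory.
Import numFieldNormedType.Exports.
Local Open Scope classical_set_scope.
Local Open Scope ring_scope.

(* Bregman balls are star-shaped about their centre q: along the segment from
   q to a point x of the ball, the dual divergence is at most t times its value
   at x by convexity of F, and the primal divergence D(q || q + t (x - q)) is
   nondecreasing in t by monotonicity of the derivative of a convex function.
   If q lies outside the box and x inside, this segment meets the boundary of
   the box, so a point of the ball inside the box forces the ball to meet the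
   boundary. *)

Section segment.
Context {R : realType}.

Lemma path_meets_boundary (T : topologicalType) (A : set T) (p : R -> T) :
  continuous p -> ~ A (p 0) -> A (p 1) ->
  exists2 t, 0 <= t <= 1 & (closure A `\` interior A) (p t).
Proof.
move=> pc nA0 A1; apply: contrapT => no_bd.
have cl_int t : 0 <= t <= 1 -> closure A (p t) -> interior A (p t).
  by move=> t01 clt; apply: contrapT => nint; apply: no_bd; exists t.
pose I01 : set R := `[0, 1]%classic.
(* Off the boundary, the preimages of [interior A] and [closure A] agree on
   [0, 1], so the former is clopen in the connected set [0, 1]. *)
have I01E t : I01 t = (0 <= t <= 1) by rewrite /I01 /= in_itv.
have I01_conn : connected I01 by apply/connected_intervalP/interval_is_interval.
suff : I01 `&` (p @^-1` interior A) = I01.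
  move=> /seteqP[_ /(_ 0)]; rewrite I01E lexx ler01.
  by move=> /(_ isT)[_ /interior_subset].
apply: I01_conn.
- exists 1; split; first by rewrite I01E lexx ler01.
  by apply: cl_int; [rewrite lexx ler01 | exact: subset_closure].
- exists (p @^-1` interior A) => //.
  by apply: open_comp => [x _|]; [exact: pc | exact: open_interior].
- exists (p @^-1` closure A).
    by apply: preimage_closed => [x _|]; [exact: pc | exact: closed_closure].
  apply/seteqP; split=> t [t01 pt]; split=> //.
    exact: subset_closure (interior_subset pt).
  by apply: cl_int => //; rewrite -I01E.
Qed.

Lemma segment_meets_boundary {V : normedModType R} {A : set V} {q x : V} :
  ~ A q -> A x ->
  exists2 t, 0 <= t <= 1 & (closure A `\` interior A) (q + t *: (x - q)).
Proof.
move=> nAq Ax; apply: path_meets_boundary.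
- by move=> t; apply: cvgD; [exact: cvg_cst | exact: scalel_continuous].
- by rewrite scale0r addr0.
- by rewrite scale1r addrC subrK.
Qed.

Lemma segment_conv (V : lmodType R) (q x : V) (t : R) :
  q + t *: (x - q) = t *: x + (1 - t) *: q.
Proof. by rewrite scalerBr scalerBl scale1r addrCA addrA. Qed.

Lemma line_sub (V : lmodType R) (q v : V) (s t : R) :
  (q + s *: v) - (q + t *: v) = (s - t) *: v.
Proof. by rewrite opprD addrACA subrr add0r scalerBl. Qed.

Lemma convex_set_segment {V : lmodType R} {A : set V} {q x : V} {t : R} :
  convex_set A -> A q -> A x -> 0 <= t <= 1 -> A (q + t *: (x - q)).
Proof.
move=> cA Aq Ax /andP[t0 t1]; rewrite segment_conv.
by have := cA x q (Itv01 t0 t1) (mem_set Ax) (mem_set Aq); rewrite inE.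
Qed.

End segment.

Section convex_differential.
Context {R : realType} {V : normedModType R}.
Implicit Types (f : V -> R) (q v x y : V).

Lemma diff_scale f x k v : 'd f x (k *: v) = k * 'd f x v.
Proof. by rewrite linearZ. Qed.

Lemma convex_diff_le_sub {f x y} :
  (forall t, 0 < t < 1 ->
     f (t *: x + (1 - t) *: y) <= t * f x + (1 - t) * f y) ->
  differentiable f y -> 'd f y (x - y) <= f x - f y.
Proof.
move=> cvx df; rewrite -deriveE //.
have := @diff_derivable _ _ _ f y (x - y) df; move/cvg_dnbhs_at_right => Dxy.
apply: (cvgr_to_le Dxy); near=> h.
have h0 : 0 < h by near: h; exact: nbhs_right_gt.
have h1 : h < 1 by near: h; exact: nbhs_right_lt.
rewrite /= /shift [h *: _ + y]addrC segment_conv -[leLHS]/(h^-1 * _).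
rewrite ler_pdivrMl //.
by have := cvx h; rewrite h0 h1 => /(_ isT); lra.
Unshelve. all: end_near.
Qed.

Definition bregman_diff f x y := f x - f y - 'd f y (x - y).

Context {Omega : set V} {f : V -> R}.
Hypothesis convex_f : forall x y t, Omega x -> Omega y -> 0 <= t <= 1 ->
  f (t *: x + (1 - t) *: y) <= t * f x + (1 - t) * f y.
Hypothesis differentiable_f : forall x, Omega x -> differentiable f x.

Lemma diff_le_sub {x y} : Omega x -> Omega y -> 'd f y (x - y) <= f x - f y.
Proof.
move=> xO yO; apply: (@convex_diff_le_sub f x y); last exact: differentiable_f.
by move=> t /andP[t0 t1]; apply: (convex_f x y t xO yO); rewrite !ltW.
Qed.

Lemma bregman_diff_ray_le {q v s s'} :
  Omega (q + s *: v) -> Omega (q + s' *: v) -> 0 <= s <= s' ->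
  bregman_diff f q (q + s *: v) <= bregman_diff f q (q + s' *: v).
Proof.
move=> Os Os' /andP[s0]; rewrite le_eqVlt => /orP[/eqP <- // | ss'].
have := diff_le_sub Os' Os; have := diff_le_sub Os Os'.
rewrite !line_sub !diff_scale => tangent_s' tangent_s.
have mono : 'd f (q + s *: v) v <= 'd f (q + s' *: v) v.
  have ss'0 : 0 < s' - s by rewrite subr_gt0.
  by rewrite -subr_ge0 -(pmulr_rge0 _ ss'0); lra.
have := ler_wpM2l s0 mono.
have center_sub u : q - (q + u *: v) = (- u) *: v.
  by rewrite opprD addNKr scaleNr.
by rewrite /bregman_diff !center_sub !diff_scale; lra.
Qed.

Lemma bregman_diff_segment_le {q x t} : Omega q -> Omega x -> 0 <= t <= 1 ->
  bregman_diff f (q + t *: (x - q)) q <= t * bregman_diff f x q.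
Proof.
move=> qO xO t01; have := convex_f x q t xO qO t01.
by rewrite /bregman_diff -segment_conv [q + _]addrC addrK diff_scale; lra.
Qed.

End convex_differential.

Section bregman_balls.
Context {R : realType} {d : nat} (Omega : set 'rV[R]_d) (F : 'rV[R]_d -> R).
Implicit Types (q x y v : 'rV[R]_d).

Lemma dotp_grad x v : dotp (grad F x) v = 'd F x v.
Proof.
have vE : v = \sum_i v ord0 i *: ebasis i.
  apply/rowP => j; rewrite summxE (bigD1 j) //= big1 ?addr0.
    by rewrite !mxE eqxx mulr1.
  by move=> i ij; rewrite !mxE (negbTE ij) mulr0.
rewrite [in RHS]vE linear_sum; apply: eq_bigr => i _.
by rewrite linearZ /= !mxE mulrC.
Qed.

Lemma bregmanE x y : bregman F x y = bregman_diff F x y.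
Proof. by rewrite /bregman dotp_grad. Qed.

Hypotheses (cvxO : convex_set Omega) (cvxF : strictly_convex_on Omega F).
Hypothesis dF : forall x, Omega x -> differentiable F x.

Lemma strictly_convex_on_le x y t : Omega x -> Omega y -> 0 <= t <= 1 ->
  F (t *: x + (1 - t) *: y) <= t * F x + (1 - t) * F y.
Proof.
move=> xO yO /andP[t0 t1].
have [->|xy] := eqVneq x y.
  by rewrite -scalerDl -mulrDl subrKC scale1r mul1r.
have [->|tn0] := eqVneq t 0.
  by rewrite scale0r mul0r !add0r subr0 scale1r mul1r.
have [->|tn1] := eqVneq t 1.
  by rewrite subrr scale0r mul0r !addr0 scale1r mul1r.
by apply/ltW/cvxF; rewrite // !lt_neqAle eq_sym tn0 tn1 t0 t1.
Qed.

Lemma primal_ball_star q r x t : Omega q -> 0 <= t <= 1 ->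
  primal_ball Omega F q r x -> primal_ball Omega F q r (q + t *: (x - q)).
Proof.
move=> qO t01 [xO Bx]; have yO := convex_set_segment cvxO qO xO t01.
split=> //; apply: le_trans Bx; rewrite !bregmanE.
have := bregman_diff_ray_le strictly_convex_on_le dF (v := x - q) (s' := 1) yO.
by rewrite scale1r subrKC; apply=> //; case/andP: t01 => -> ->.
Qed.

Lemma dual_ball_star q r x t : Omega q -> 0 <= r -> 0 <= t <= 1 ->
  dual_ball Omega F q r x -> dual_ball Omega F q r (q + t *: (x - q)).
Proof.
move=> qO r0 t01 [xO Bx]; split; first exact: convex_set_segment.
have := bregman_diff_segment_le strictly_convex_on_le qO xO t01.
rewrite -!bregmanE => /le_trans; apply; case/andP: t01 => t0 t1.
by apply: le_trans (ler_piMl r0 t1); rewrite ler_wpM2l.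
Qed.

End bregman_balls.

Theorem lemma3 (R : realType) (d : nat) (Omega : set 'rV[R]_d)
  (F : 'rV[R]_d -> R) (a b : 'I_d -> R) (q : 'rV[R]_d) (r : R)
  (B : set 'rV[R]_d) :
  Omega !=set0 -> open Omega -> convex_set Omega ->
  legendre_type Omega F ->
  (forall i, a i < b i) ->
  Omega q -> ~ box a b q ->
  0 <= r ->
  (B = primal_ball Omega F q r \/ B = dual_ball Omega F q r) ->
  B `&` boundary (box a b) = set0 ->
  box a b `&` Omega `<=` Omega `\` B.
Proof.
move=> _ _ cvxO [dF cvxF _] _ qO q_out r0 HB B_bd x [x_box xO]; split=> // xB.
have [t t01 y_bd] := segment_meets_boundary q_out x_box.
have yB : B (q + t *: (x - q)).
  case: HB xB => -> xB; first exact: primal_ball_star.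
  exact: dual_ball_star.
by have : (B `&` boundary (box a b)) (q + t *: (x - q)) by []; rewrite B_bd.
Qed.
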